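(* Let $m\ge1$ be an integer, $\beta\in\mathbb R$, and let $T>0$ and $f:[-T,T]\to\mathbb R$ be the unique pair with $f''=-f^3+\beta f$, $f(\pm T)=0$, $f'(\pm T)=\mp m$, $f>0$ on $(-T,T)$. Define $k>0$ by $k^2=\tfrac12\bigl(1+\beta/\sqrt{2m^2+\beta^2}\bigr)$ and $K(k)=\int_0^1\frac{dx}{\sqrt{1-x^2}\sqrt{1-k^2x^2}}$. Then $$T=\frac{K(k)}{\sqrt[4]{2m^2+\beta^2}},\qquad \int_{-T}^Tf\,dt=2\sqrt2\arcsin(k),\qquad \int_{-T}^Tf^3\,dt=2\beta\sqrt2\arcsin(k)+2m,$$ $$\int_{-T}^Tf^5\,dt=(2m^2+3\beta^2)\sqrt2\arcsin(k)+3m\beta .$$ *)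

From Stdlib Require Import Reals Lra.
Open Scope R_scope.

Definition improper_RInt_right (g : R -> R) (a b l : R) : Prop :=
  exists pr : forall c, a <= c < b -> Riemann_integrable g a c,
    forall eps, eps > 0 -> exists delta, delta > 0 /\
      forall c (h : a <= c < b), b - c < delta -> Rabs (RiemannInt (pr c h) - l) < eps.

Definition K_integrand (k : R) (x : R) : R :=
  / (sqrt (1 - x ^ 2) * sqrt (1 - k ^ 2 * x ^ 2)).

Definition RInt_eq (g : R -> R) (a b v : R) : Prop :=
  exists pr : Riemann_integrable g a b, RiemannInt pr = v.

From Stdlib Require Import Reals Lra Lia.
From Coquelicot Require Import Coquelicot.
Open Scope R_scope.
Set Bullet Behavior "Strict Subproofs".

(* Write s = sqrt (2 m^2 + beta^2), so that k^2 = (s + beta) / (2 s).  Along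
   the solution energy is conserved, f'^2 = m^2 - f^4 / 2 + beta f^2, and the
   angle psi = atan (sqrt 2 f' / (s - beta + f^2)) satisfies psi' = - f / sqrt 2
   and drops from asin k at -T to - asin k at T.  Hence:
   - f, f^3 and f^5 have explicit primitives built from psi, f and f', and the
     fundamental theorem of calculus gives the three moments;
   - x = sin psi / k runs from 1 down to -1 and (F(x(t), k))' = - sqrt s, where
     F(., k) is the incomplete elliptic integral of the first kind; letting t
     tend to both endpoints and using that F(., k) is odd gives K(k) = sqrt s T. *)

(* Pointwise derivative rules in the shape [fun t => op (f t) (g t)], so that
   [apply] matches the lambda-terms produced by unfolding definitions. *)
Lemma dpl_eq f x l l' : l = l' -> derivable_pt_lim f x l -> derivable_pt_lim f x l'.
Proof. now intros <-. Qed.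

Lemma dpl_const c t : derivable_pt_lim (fun _ => c) t 0.
Proof. apply derivable_pt_lim_const. Qed.

Lemma dpl_id t : derivable_pt_lim (fun t => t) t 1.
Proof. apply derivable_pt_lim_id. Qed.

Lemma dpl_opp (f : R -> R) t a :
  derivable_pt_lim f t a -> derivable_pt_lim (fun t => - f t) t (- a).
Proof. apply (derivable_pt_lim_opp f). Qed.

Lemma dpl_plus (f g : R -> R) t a b : derivable_pt_lim f t a -> derivable_pt_lim g t b ->
  derivable_pt_lim (fun t => f t + g t) t (a + b).
Proof. apply (derivable_pt_lim_plus f g). Qed.

Lemma dpl_minus (f g : R -> R) t a b : derivable_pt_lim f t a -> derivable_pt_lim g t b ->
  derivable_pt_lim (fun t => f t - g t) t (a - b).
Proof. apply (derivable_pt_lim_minus f g). Qed.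

Lemma dpl_mult (f g : R -> R) t a b : derivable_pt_lim f t a -> derivable_pt_lim g t b ->
  derivable_pt_lim (fun t => f t * g t) t (a * g t + f t * b).
Proof. apply (derivable_pt_lim_mult f g). Qed.

Lemma dpl_div (f g : R -> R) t a b :
  derivable_pt_lim f t a -> derivable_pt_lim g t b -> g t <> 0 ->
  derivable_pt_lim (fun t => f t / g t) t ((a * g t - b * f t) / g t ^ 2).
Proof.
  intros Hf Hg Hz.
  eapply dpl_eq; [ | exact (derivable_pt_lim_div f g t a b Hf Hg Hz) ].
  unfold Rsqr; simpl; field; exact Hz.
Qed.

Lemma dpl_comp (f g : R -> R) t a b :
  derivable_pt_lim f t a -> derivable_pt_lim g (f t) b ->
  derivable_pt_lim (fun t => g (f t)) t (b * a).
Proof. apply derivable_pt_lim_comp. Qed.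

Lemma dpl_pow (f : R -> R) n t a : derivable_pt_lim f t a ->
  derivable_pt_lim (fun t => f t ^ n) t (INR n * f t ^ pred n * a).
Proof.
  intro Hf. eapply dpl_eq; [ | exact (dpl_comp f _ t a _ Hf (derivable_pt_lim_pow (f t) n)) ].
  ring.
Qed.

Lemma dpl_atan (f : R -> R) t a : derivable_pt_lim f t a ->
  derivable_pt_lim (fun t => atan (f t)) t (a / (1 + f t ^ 2)).
Proof.
  intro Hf. eapply dpl_eq; [ | exact (dpl_comp f atan t a _ Hf (derivable_pt_lim_atan (f t))) ].
  unfold Rdiv; ring.
Qed.

Lemma dpl_sin (f : R -> R) t a : derivable_pt_lim f t a ->
  derivable_pt_lim (fun t => sin (f t)) t (cos (f t) * a).
Proof. intro Hf. exact (dpl_comp f sin t a _ Hf (derivable_pt_lim_sin (f t))). Qed.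

Ltac dpl_step := first [ apply dpl_const | eassumption | apply dpl_id | apply dpl_opp
  | apply dpl_plus | apply dpl_minus | apply dpl_div | apply dpl_mult | apply dpl_pow
  | apply dpl_atan | apply dpl_sin | lra ].
Ltac dpl := eapply dpl_eq; [ | repeat dpl_step ]; cbv beta.

Lemma cpt_const c t : continuity_pt (fun _ => c) t.
Proof. now apply continuity_pt_const. Qed.

Lemma cpt_pow (f : R -> R) n t : continuity_pt f t -> continuity_pt (fun t => f t ^ n) t.
Proof.
  intro Hf. induction n as [|n IH]; simpl.
  - apply cpt_const.
  - now apply (continuity_pt_mult f (fun t => f t ^ n)).
Qed.

Lemma cpt_comp (f g : R -> R) t :
  continuity_pt f t -> continuity_pt g (f t) -> continuity_pt (fun t => g (f t)) t.
Proof. apply continuity_pt_comp. Qed.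

Lemma cpt_atan (f : R -> R) t : continuity_pt f t -> continuity_pt (fun t => atan (f t)) t.
Proof.
  intro Hf. apply (cpt_comp f atan); [exact Hf |].
  apply derivable_continuous_pt. exists (/ (1 + f t ^ 2)). apply derivable_pt_lim_atan.
Qed.

Lemma cpt_sin (f : R -> R) t : continuity_pt f t -> continuity_pt (fun t => sin (f t)) t.
Proof. intro Hf. apply (cpt_comp f sin); [exact Hf | apply continuity_sin]. Qed.

Lemma cpt_sqrt (f : R -> R) t :
  continuity_pt f t -> 0 <= f t -> continuity_pt (fun t => sqrt (f t)) t.
Proof. intros Hf Hp. apply (cpt_comp f sqrt); [exact Hf | now apply continuity_pt_sqrt]. Qed.

Ltac cpt_step := first [ apply cpt_const | solve [auto] | apply continuity_pt_id
  | apply (continuity_pt_minus (fun t => _) (fun t => _))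
  | apply (continuity_pt_plus (fun t => _) (fun t => _))
  | apply (continuity_pt_opp (fun t => _)) | apply cpt_pow
  | apply (continuity_pt_div (fun t => _) (fun t => _))
  | apply (continuity_pt_mult (fun t => _) (fun t => _))
  | apply cpt_atan | apply cpt_sin | apply cpt_sqrt | apply (continuity_pt_inv (fun t => _)) ].
Ltac cpt := repeat cpt_step.

(* A function continuous on [a, b] (relative to [a, b]) becomes continuous on
   the whole line once composed with the clamping map onto [a, b]; the
   composite keeps the derivatives of the original at interior points. *)
Definition clamp (a b t : R) := Rmax a (Rmin b t).

Lemma clamp_in a b t : a <= b -> a <= clamp a b t <= b.
Proof. intro. unfold clamp, Rmax, Rmin. repeat destruct Rle_dec; lra. Qed.

Lemma clamp_id a b t : a <= t <= b -> clamp a b t = t.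
Proof. intro. unfold clamp, Rmax, Rmin. repeat destruct Rle_dec; lra. Qed.

Lemma clamp_lipschitz a b y t : a <= b -> Rabs (clamp a b y - clamp a b t) <= Rabs (y - t).
Proof.
  intro. unfold clamp, Rmax, Rmin.
  repeat destruct Rle_dec; unfold Rabs; repeat destruct Rcase_abs; lra.
Qed.

Lemma clamp_continuous (f : R -> R) a b : a <= b ->
  (forall t, a <= t <= b -> limit1_in f (fun x => a <= x <= b) (f t) t) ->
  forall t, continuity_pt (fun t => f (clamp a b t)) t.
Proof.
  intros Hab Hf t eps Heps.
  destruct (Hf (clamp a b t) (clamp_in a b t Hab) eps Heps) as [alp [Halp Hclose]].
  exists alp. split; [exact Halp |]. intros y [_ Hy]. apply Hclose. split.
  - now apply clamp_in.
  - simpl in *. unfold R_dist in *. eapply Rle_lt_trans; [apply clamp_lipschitz |]; auto.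
Qed.

Lemma clamp_derivable (f : R -> R) a b t l : a < t < b -> derivable_pt_lim f t l ->
  derivable_pt_lim (fun t => f (clamp a b t)) t l.
Proof.
  intros Ht Hf. apply is_derive_Reals. apply is_derive_Reals in Hf.
  apply (is_derive_ext_loc f); [ | exact Hf ].
  apply (locally_interval _ t a b); [simpl; lra | simpl; lra |].
  intros y Hya Hyb. simpl in *. rewrite clamp_id; lra.
Qed.

Lemma const_on_interval (H : R -> R) a b : a <= b ->
  (forall x, a < x < b -> derivable_pt_lim H x 0) ->
  (forall x, a <= x <= b -> continuity_pt H x) -> H b = H a.
Proof.
  intros Hab Hd Hc.
  destruct (MVT_gen H a b (fun _ => 0)) as [c [_ Hmvt]]; [ | | lra].
  all: intros x Hx; rewrite Rmin_left, Rmax_right in Hx by lra.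
  - apply is_derive_Reals. now apply Hd.
  - now apply Hc.
Qed.

Lemma FTC_open (g G : R -> R) a b : a <= b ->
  (forall x, continuity_pt g x) ->
  (forall x, a < x < b -> derivable_pt_lim G x (g x)) ->
  (forall x, a <= x <= b -> continuity_pt G x) ->
  is_RInt g a b (G b - G a).
Proof.
  intros Hab Hg HG HGc.
  assert (Hint : forall x, is_RInt g a x (RInt g a x)).
  { intro x. apply (RInt_correct g), ex_RInt_continuous.
    intros z _. now apply continuity_pt_filterlim. }
  assert (HP : forall x, derivable_pt_lim (fun x => RInt g a x) x (g x)).
  { intro x. apply is_derive_Reals, (is_derive_RInt g (fun x => RInt g a x) a).
    - apply filter_forall. exact Hint.
    - now apply continuity_pt_filterlim. }
  assert (Hdiff : (fun x => RInt g a x - G x) b = (fun x => RInt g a x - G x) a).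
  { apply (const_on_interval (fun x => RInt g a x - G x)); [exact Hab | |].
    - intros x Hx. pose proof (HP x). pose proof (HG x Hx). dpl. lra.
    - intros x Hx. apply (continuity_pt_minus (fun x => _) G); [ | now apply HGc].
      apply derivable_continuous_pt. exists (g x). apply HP. }
  simpl in Hdiff. rewrite RInt_point in Hdiff.
  replace (G b - G a) with (RInt g a b) by (unfold zero in Hdiff; simpl in Hdiff; lra).
  apply Hint.
Qed.

Definition left_limit (P : R -> R) (b L : R) : Prop :=
  forall eps, 0 < eps -> exists delta, 0 < delta /\
    forall c, b - delta < c < b -> Rabs (P c - L) < eps.

Lemma left_limit_unique (P Q : R -> R) a b L1 L2 : a < b ->
  (forall c, a < c < b -> P c = Q c) -> left_limit P b L1 -> left_limit Q b L2 -> L1 = L2.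
Proof.
  intros Hab Hagree HP HQ. destruct (Req_dec L1 L2) as [|Hne]; [assumption | exfalso].
  assert (Heps : 0 < Rabs (L1 - L2) / 2) by (apply Rdiv_lt_0_compat; [apply Rabs_pos_lt | ]; lra).
  destruct (HP _ Heps) as [d1 [Hd1 H1]]. destruct (HQ _ Heps) as [d2 [Hd2 H2]].
  set (d := Rmin (Rmin d1 d2) (b - a)).
  assert (Hd : 0 < d) by (repeat apply Rmin_pos; lra).
  assert (Hd1' : d <= d1) by (eapply Rle_trans; apply Rmin_l).
  assert (Hd2' : d <= d2) by (eapply Rle_trans; [apply Rmin_l | apply Rmin_r]).
  assert (Hdab : d <= b - a) by apply Rmin_r.
  specialize (H1 (b - d / 2) ltac:(lra)). specialize (H2 (b - d / 2) ltac:(lra)).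
  rewrite Hagree in H1 by lra. revert H1 H2. split_Rabs; lra.
Qed.

Lemma near_left_end (X : R -> R) a b c eta : continuity_pt X a -> a < b -> c < X a -> 0 < eta ->
  exists t, a < t < b /\ t - a < eta /\ c < X t.
Proof.
  intros HX Hab Hc Heta.
  destruct (HX (X a - c) ltac:(lra)) as [alp [Halp Hclose]].
  set (d := Rmin (Rmin alp (b - a)) eta).
  assert (Hd : 0 < d) by (repeat apply Rmin_pos; lra).
  assert (Hda : d <= alp) by (eapply Rle_trans; apply Rmin_l).
  assert (Hdb : d <= b - a) by (eapply Rle_trans; [apply Rmin_l | apply Rmin_r]).
  assert (Hde : d <= eta) by apply Rmin_r.
  exists (a + d / 2). split; [lra | split; [lra |]].
  assert (Hnear : Rabs (X (a + d / 2) - X a) < X a - c).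
  { apply Hclose. split; [split; [exact I | lra] |].
    simpl. unfold R_dist. rewrite Rabs_right; lra. }
  revert Hnear. split_Rabs; lra.
Qed.

Lemma left_limit_along_curve (P X : R -> R) a b l r q C :
  a < b -> 0 < q -> continuity_pt X a -> X a = r ->
  (forall t, a < t < b -> l < X t < r) ->
  (forall t, a < t < b -> P (X t) = C - q * t) ->
  (forall u v, l < u -> u <= v -> v < r -> P u <= P v) ->
  left_limit P r (C - q * a).
Proof.
  intros Hab Hq HX HXa Hrange Hlevel Hmono eps Heps.
  destruct (near_left_end X a b (r - 1) (eps / q) HX Hab ltac:(lra)
              ltac:(apply Rdiv_lt_0_compat; lra)) as [t0 [Ht0 [Ht0a _]]].
  assert (Hqt0 : q * (t0 - a) < eps).
  { apply (Rmult_lt_compat_l q) in Ht0a; [ | lra]. field_simplify in Ht0a; lra. }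
  pose proof (Hrange t0 Ht0) as HXt0.
  exists (r - X t0). split; [lra |]. intros c Hc.
  assert (Hlower : C - q * t0 <= P c)
    by (rewrite <- Hlevel by exact Ht0; apply Hmono; lra).
  destruct (near_left_end X a b c (b - a) HX Hab ltac:(lra) ltac:(lra)) as [t [Ht [_ Hct]]].
  assert (Hupper : P c <= C - q * t)
    by (rewrite <- Hlevel by exact Ht; apply Hmono; pose proof (Hrange t Ht); lra).
  assert (q * a < q * t) by (apply Rmult_lt_compat_l; lra).
  split_Rabs; lra.
Qed.

Lemma improper_of_left_limit (g : R -> R) a b L :
  (forall x, a <= x < b -> continuity_pt g x) ->
  left_limit (fun c => RInt g a c) b L -> improper_RInt_right g a b L.
Proof.
  intros Hg HL.
  assert (Hex : forall c, a <= c < b -> ex_RInt g a c).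
  { intros c Hc. apply (ex_RInt_continuous (V := R_CompleteNormedModule)). intros z Hz.
    apply continuity_pt_filterlim, Hg.
    rewrite Rmin_left, Rmax_right in Hz by lra. lra. }
  exists (fun c h => ex_RInt_Reals_0 _ _ _ (Hex c h)).
  intros eps Heps. destruct (HL eps Heps) as [delta [Hdelta Hclose]].
  exists delta. split; [exact Hdelta |]. intros c h Hc.
  rewrite <- RInt_Reals. apply Hclose. lra.
Qed.

Lemma RInt_eq_of_agree (G g : R -> R) a b v : a < b -> is_RInt G a b v ->
  (forall x, a < x < b -> G x = g x) -> RInt_eq g a b v.
Proof.
  intros Hab HG Hagree.
  assert (Hg : is_RInt g a b v).
  { apply (is_RInt_ext G); [ | exact HG].
    intros x Hx. rewrite Rmin_left, Rmax_right in Hx by lra. now apply Hagree. }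
  exists (ex_RInt_Reals_0 g a b (ex_intro _ v Hg)).
  rewrite <- RInt_Reals. exact (is_RInt_unique g a b v Hg).
Qed.

Definition ellF (k c : R) := RInt (K_integrand k) 0 c.

Lemma K_integrand_factors_pos k x : k ^ 2 <= 1 -> -1 < x < 1 ->
  0 < 1 - x ^ 2 /\ 0 < 1 - k ^ 2 * x ^ 2.
Proof. intros Hk Hx. assert (0 < 1 - x ^ 2) by nra. split; nra. Qed.

Lemma K_integrand_pos k x : k ^ 2 <= 1 -> -1 < x < 1 -> 0 < K_integrand k x.
Proof.
  intros Hk Hx. destruct (K_integrand_factors_pos k x Hk Hx).
  unfold K_integrand. apply Rinv_0_lt_compat, Rmult_lt_0_compat; now apply sqrt_lt_R0.
Qed.

Lemma K_integrand_continuous k x : k ^ 2 <= 1 -> -1 < x < 1 -> continuity_pt (K_integrand k) x.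
Proof.
  intros Hk Hx. destruct (K_integrand_factors_pos k x Hk Hx).
  pose proof (K_integrand_pos k x Hk Hx) as Hpos. unfold K_integrand in *.
  cpt; try lra. intro Hz. rewrite Hz, Rinv_0 in Hpos. lra.
Qed.

Lemma ellF_derivable k x : k ^ 2 <= 1 -> -1 < x < 1 ->
  derivable_pt_lim (ellF k) x (K_integrand k x).
Proof.
  intros Hk Hx. apply is_derive_Reals, (is_derive_RInt (K_integrand k) (ellF k) 0 x).
  - apply (locally_interval _ x (-1) 1); [simpl; lra | simpl; lra |].
    intros y Hy1 Hy2. simpl in Hy1, Hy2.
    apply (RInt_correct (K_integrand k)), ex_RInt_continuous. intros z Hz.
    apply continuity_pt_filterlim, K_integrand_continuous; [exact Hk |].
    unfold Rmin, Rmax in Hz. destruct Rle_dec; lra.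
  - now apply continuity_pt_filterlim, K_integrand_continuous.
Qed.

Lemma ellF_continuous k x : k ^ 2 <= 1 -> -1 < x < 1 -> continuity_pt (ellF k) x.
Proof.
  intros Hk Hx. apply derivable_continuous_pt.
  exists (K_integrand k x). now apply ellF_derivable.
Qed.

Lemma ellF_mono k u v : k ^ 2 <= 1 -> -1 < u -> u <= v -> v < 1 -> ellF k u <= ellF k v.
Proof.
  intros Hk Hu Huv Hv.
  destruct (MVT_gen (ellF k) u v (K_integrand k)) as [c [Hc Hmvt]].
  1, 2: intros x Hx; rewrite Rmin_left, Rmax_right in Hx by lra.
  - apply is_derive_Reals, ellF_derivable; [exact Hk | lra].
  - apply ellF_continuous; [exact Hk | lra].
  - rewrite Rmin_left, Rmax_right in Hc by lra.
    pose proof (K_integrand_pos k c Hk ltac:(lra)). nra.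
Qed.

Lemma ellF_odd k x : k ^ 2 <= 1 -> 0 <= x < 1 -> ellF k (- x) = - ellF k x.
Proof.
  intros Hk Hx.
  assert (Hsym : (fun y => ellF k y + ellF k (- y)) x = (fun y => ellF k y + ellF k (- y)) 0).
  { apply (const_on_interval (fun y => ellF k y + ellF k (- y))); [lra | |].
    - intros y Hy. pose proof (ellF_derivable k y Hk ltac:(lra)).
      pose proof (dpl_comp (fun y => - y) (ellF k) y _ _ (dpl_opp _ y _ (dpl_id y))
                    (ellF_derivable k (- y) Hk ltac:(lra))).
      dpl. unfold K_integrand. replace ((- y) ^ 2) with (y ^ 2) by ring. ring.
    - intros y Hy.
      apply (continuity_pt_plus (ellF k) (fun y => ellF k (- y))).
      + apply ellF_continuous; [exact Hk | lra].
      + apply (cpt_comp (fun y => - y) (ellF k)).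
        * apply (continuity_pt_opp (fun y => y)), continuity_pt_id.
        * apply ellF_continuous; [exact Hk | lra]. }
  simpl in Hsym. rewrite Ropp_0 in Hsym. unfold ellF at 3 4 in Hsym. rewrite RInt_point in Hsym.
  unfold zero in Hsym; simpl in Hsym. lra.
Qed.

Definition droot (m beta : R) := sqrt (2 * m ^ 2 + beta ^ 2).
Definition kmod (m beta : R) := sqrt ((1 + beta / droot m beta) / 2).

Lemma sqrt2_facts : sqrt 2 ^ 2 = 2 /\ 0 < sqrt 2.
Proof. split; [apply pow2_sqrt | apply sqrt_lt_R0]; lra. Qed.

Lemma droot_facts m beta : m <> 0 ->
  0 < droot m beta /\ droot m beta ^ 2 = 2 * m ^ 2 + beta ^ 2 /\
  0 < droot m beta - beta /\ 0 < droot m beta + beta.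
Proof.
  intro hm. unfold droot.
  assert (hm2 : 0 < m ^ 2) by (apply pow2_gt_0; exact hm).
  assert (h0 : 0 < 2 * m ^ 2 + beta ^ 2) by nra.
  assert (hs : 0 < sqrt (2 * m ^ 2 + beta ^ 2)) by (apply sqrt_lt_R0; exact h0).
  assert (h2 : sqrt (2 * m ^ 2 + beta ^ 2) ^ 2 = 2 * m ^ 2 + beta ^ 2) by (apply pow2_sqrt; lra).
  repeat split; nra.
Qed.

Lemma kmod_facts m beta : m <> 0 ->
  0 < kmod m beta < 1 /\ kmod m beta ^ 2 = (droot m beta + beta) / (2 * droot m beta).
Proof.
  intro hm. destruct (droot_facts m beta hm) as [hs [_ [h1 h2]]].
  assert (Hq : (1 + beta / droot m beta) / 2 = (droot m beta + beta) / (2 * droot m beta))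
    by (field; lra).
  assert (Hq0 : 0 < (droot m beta + beta) / (2 * droot m beta))
    by (apply Rdiv_lt_0_compat; lra).
  assert (Hk2 : kmod m beta ^ 2 = (droot m beta + beta) / (2 * droot m beta))
    by (unfold kmod; rewrite Hq, pow2_sqrt; lra).
  assert (Hk0 : 0 < kmod m beta) by (unfold kmod; rewrite Hq; now apply sqrt_lt_R0).
  assert (Hk1 : kmod m beta ^ 2 < 1).
  { rewrite Hk2. apply (Rmult_lt_reg_r (2 * droot m beta)); [lra |].
    field_simplify; lra. }
  repeat split; nra.
Qed.

(* The angle asin k, in the form in which it arises from the boundary data. *)
Lemma atan_eq_asin_kmod m beta : 0 < m ->
  atan (sqrt 2 * m / (droot m beta - beta)) = asin (kmod m beta).
Proof.
  intro hm. destruct (kmod_facts m beta ltac:(lra)) as [[hk0 hk1] hk2].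
  destruct (droot_facts m beta ltac:(lra)) as [hs [hs2 [h1 h2]]].
  destruct sqrt2_facts as [hr2 hr0].
  rewrite asin_atan by lra. f_equal.
  set (k := kmod m beta) in *. set (s := droot m beta) in *.
  assert (H1k : 0 < 1 - k²) by (unfold Rsqr; nra).
  assert (Hsq : sqrt (1 - k²) ^ 2 = 1 - k²) by (apply pow2_sqrt; lra).
  assert (Hsq0 : 0 < sqrt (1 - k²)) by (apply sqrt_lt_R0; lra).
  apply Rsqr_inj; [apply Rlt_le, Rdiv_lt_0_compat; nra | apply Rlt_le, Rdiv_lt_0_compat; lra |].
  rewrite !Rsqr_div', Rsqr_mult, !Rsqr_sqrt, !Rsqr_pow2, hk2 by (unfold Rsqr; nra).
  replace (m ^ 2) with ((s ^ 2 - beta ^ 2) / 2) by lra.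
  field; lra.
Qed.

Lemma droot_shift_pos m beta y : m <> 0 -> 0 < droot m beta - beta + y ^ 2.
Proof. intro hm. destruct (droot_facts m beta hm) as [_ [_ [h _]]]. nra. Qed.

(* The algebra behind (atan (sqrt 2 v / (s - beta + y^2)))' = - y / sqrt 2
   along an orbit: here v = y', (- y^3 + beta y) = v' and the energy relation
   v^2 = m^2 - y^4 / 2 + beta y^2 holds. *)
Lemma atan_angle_identity (y v s beta m : R) :
  s ^ 2 = 2 * m ^ 2 + beta ^ 2 -> v ^ 2 = m ^ 2 - y ^ 4 / 2 + beta * y ^ 2 ->
  0 < s - beta + y ^ 2 ->
  (sqrt 2 * (- y ^ 3 + beta * y) * (s - beta + y ^ 2) - 2 * y * v * (sqrt 2 * v))
    / (s - beta + y ^ 2) ^ 2 / (1 + (sqrt 2 * v / (s - beta + y ^ 2)) ^ 2) = - y / sqrt 2.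
Proof.
  intros Hs Hv HD. destruct sqrt2_facts as [Hr Hr0].
  assert (Hs0 : 0 < s) by nra.
  replace (1 + (sqrt 2 * v / (s - beta + y ^ 2)) ^ 2) with (2 * s / (s - beta + y ^ 2)).
  2: { field_simplify_eq; [ | lra].
       replace ((sqrt 2 * v) ^ 2) with (sqrt 2 ^ 2 * v ^ 2) by ring. rewrite Hr, Hv.
       replace (m ^ 2) with ((s ^ 2 - beta ^ 2) / 2) by lra. field. }
  replace (2 * y * v * (sqrt 2 * v)) with (2 * y * sqrt 2 * v ^ 2) by ring. rewrite Hv.
  replace (m ^ 2) with ((s ^ 2 - beta ^ 2) / 2) by lra.
  field_simplify_eq; [ | split; lra].
  replace (sqrt 2 ^ 2) with 2 by lra. ring.
Qed.

Lemma sin_atan_sq u : sin (atan u) ^ 2 = u ^ 2 / (1 + u ^ 2).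
Proof.
  rewrite sin_atan. unfold Rdiv. rewrite Rpow_mult_distr, pow_inv, pow2_sqrt.
  - unfold Rsqr. f_equal. f_equal. ring.
  - unfold Rsqr. nra.
Qed.

(* The hypotheses of the theorem for a solution F (with F' = F1) of
   F'' = - F^3 + beta F on (-T, T), already extended continuously to the
   whole line. *)
Record orbit {T beta m : R} {F F1 : R -> R} : Prop := {
  orbit_T : 0 < T;
  orbit_m : 0 < m;
  orbit_F_cont : forall t, continuity_pt F t;
  orbit_F1_cont : forall t, continuity_pt F1 t;
  orbit_F_der : forall t, -T < t < T -> derivable_pt_lim F t (F1 t);
  orbit_F1_der : forall t, -T < t < T -> derivable_pt_lim F1 t (- F t ^ 3 + beta * F t);
  orbit_F_left : F (-T) = 0;
  orbit_F_right : F T = 0;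
  orbit_F1_left : F1 (-T) = m;
  orbit_F1_right : F1 T = - m;
  orbit_pos : forall t, -T < t < T -> 0 < F t }.
Arguments orbit : clear implicits.

Section Orbit.
Variables (T beta m : R) (F F1 : R -> R).
Hypothesis Horb : orbit T beta m F F1.

Lemma energy t : -T <= t <= T -> F1 t ^ 2 = m ^ 2 - F t ^ 4 / 2 + beta * F t ^ 2.
Proof.
  intro Ht. destruct Horb as [_ _ HFc HF1c HdF HdF1 HFl _ HF1l _ _].
  pose (E := fun t => F1 t ^ 2 + F t ^ 4 / 2 - beta * F t ^ 2).
  assert (HE : E t = E (-T)).
  { apply const_on_interval; [lra | |].
    - intros x Hx. pose proof (HdF x ltac:(lra)). pose proof (HdF1 x ltac:(lra)).
      unfold E. dpl. simpl. field.
    - intros x _. unfold E. cpt. }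
  unfold E in HE. rewrite HFl, HF1l in HE. lra.
Qed.

Definition psi t := atan (sqrt 2 * F1 t / (droot m beta - beta + F t ^ 2)).

Lemma psi_derivable t : -T < t < T -> derivable_pt_lim psi t (- F t / sqrt 2).
Proof.
  intro Ht. pose proof (orbit_m Horb) as hm.
  pose proof (orbit_F_der Horb t Ht). pose proof (orbit_F1_der Horb t Ht).
  pose proof (droot_shift_pos m beta (F t) ltac:(lra)) as HD.
  destruct (droot_facts m beta ltac:(lra)) as [hs [hs2 _]].
  destruct sqrt2_facts as [hr2 hr0].
  unfold psi. dpl.
  rewrite <- (atan_angle_identity (F t) (F1 t) (droot m beta) beta m hs2); auto.
  - simpl. field. split; nra.
  - apply energy. lra.
Qed.

Lemma psi_continuous t : continuity_pt psi t.
Proof.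
  pose proof (droot_shift_pos m beta (F t) ltac:(pose proof (orbit_m Horb); lra)).
  pose proof (orbit_F_cont Horb). pose proof (orbit_F1_cont Horb).
  unfold psi. cpt. lra.
Qed.

Lemma psi_ends : psi (-T) = asin (kmod m beta) /\ psi T = - asin (kmod m beta).
Proof.
  destruct Horb as [_ hm _ _ _ _ HFl HFr HF1l HF1r _].
  destruct (droot_facts m beta ltac:(lra)) as [_ [_ [h _]]].
  rewrite <- atan_eq_asin_kmod by exact hm. unfold psi.
  rewrite HFl, HFr, HF1l, HF1r, <- atan_opp.
  split; f_equal; simpl; field; lra.
Qed.

(* Since F^3 = beta F - F1',
   and F^5 = (m^2 F + 3 beta / 2 F^3 - (F^2 F1 / 2)')' by the energy relation,
   all three are built from the single angle psi. *)
Definition prim1 t := - sqrt 2 * psi t.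
Definition prim3 t := beta * prim1 t - F1 t.
Definition prim5 t := m ^ 2 * prim1 t + 3 * beta / 2 * prim3 t - F t ^ 2 * F1 t / 2.

Lemma prim1_derivable t : -T < t < T -> derivable_pt_lim prim1 t (F t).
Proof.
  intro Ht. pose proof (psi_derivable t Ht). destruct sqrt2_facts.
  unfold prim1. dpl. field. lra.
Qed.

Lemma prim3_derivable t : -T < t < T -> derivable_pt_lim prim3 t (F t ^ 3).
Proof.
  intro Ht. pose proof (prim1_derivable t Ht). pose proof (orbit_F1_der Horb t Ht).
  unfold prim3. dpl. simpl. ring.
Qed.

Lemma prim5_derivable t : -T < t < T -> derivable_pt_lim prim5 t (F t ^ 5).
Proof.
  intro Ht. pose proof (prim1_derivable t Ht). pose proof (prim3_derivable t Ht).
  pose proof (orbit_F_der Horb t Ht). pose proof (orbit_F1_der Horb t Ht).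
  pose proof (energy t ltac:(lra)) as Hen.
  unfold prim5. dpl. cbv beta.
  replace (F t ^ 5) with (m ^ 2 * F t + 3 * beta / 2 * F t ^ 3 - F t * F1 t ^ 2
                          + F t ^ 2 * (F t ^ 3 - beta * F t) / 2) by (rewrite Hen; field).
  simpl. field.
Qed.

Lemma prims_continuous t :
  continuity_pt prim1 t /\ continuity_pt prim3 t /\ continuity_pt prim5 t.
Proof.
  pose proof psi_continuous. pose proof (orbit_F_cont Horb). pose proof (orbit_F1_cont Horb).
  assert (continuity_pt prim1 t) by (unfold prim1; cpt).
  assert (continuity_pt prim3 t) by (unfold prim3; cpt).
  split; [ | split]; auto. unfold prim5; cpt.
Qed.

Lemma prim1_increment : prim1 T - prim1 (-T) = 2 * sqrt 2 * asin (kmod m beta).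
Proof. destruct psi_ends as [Hl Hr]. unfold prim1. rewrite Hl, Hr. ring. Qed.

Lemma integral_F : is_RInt F (-T) T (2 * sqrt 2 * asin (kmod m beta)).
Proof.
  rewrite <- prim1_increment. pose proof (orbit_T Horb).
  apply FTC_open; [lra | apply (orbit_F_cont Horb) | exact prim1_derivable |].
  intros; apply prims_continuous.
Qed.

Lemma integral_F3 : is_RInt (fun t => F t ^ 3) (-T) T
  (2 * beta * sqrt 2 * asin (kmod m beta) + 2 * m).
Proof.
  replace (2 * beta * sqrt 2 * asin (kmod m beta) + 2 * m) with (prim3 T - prim3 (-T)).
  2: { pose proof prim1_increment. unfold prim3.
       rewrite (orbit_F1_left Horb), (orbit_F1_right Horb). nra. }
  pose proof (orbit_T Horb). pose proof (orbit_F_cont Horb).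
  apply FTC_open; [lra | intro; cpt | exact prim3_derivable |].
  intros; apply prims_continuous.
Qed.

Lemma integral_F5 : is_RInt (fun t => F t ^ 5) (-T) T
  ((2 * m ^ 2 + 3 * beta ^ 2) * sqrt 2 * asin (kmod m beta) + 3 * m * beta).
Proof.
  replace ((2 * m ^ 2 + 3 * beta ^ 2) * sqrt 2 * asin (kmod m beta) + 3 * m * beta)
    with (prim5 T - prim5 (-T)).
  2: { pose proof prim1_increment. unfold prim5, prim3.
       rewrite (orbit_F1_left Horb), (orbit_F1_right Horb),
               (orbit_F_left Horb), (orbit_F_right Horb). nra. }
  pose proof (orbit_T Horb). pose proof (orbit_F_cont Horb).
  apply FTC_open; [lra | intro; cpt | exact prim5_derivable |].
  intros; apply prims_continuous.
Qed.

Definition xcoord t := sin (psi t) / kmod m beta.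

Lemma sin_psi_sq t : -T <= t <= T ->
  sin (psi t) ^ 2 = kmod m beta ^ 2 - F t ^ 2 / (2 * droot m beta).
Proof.
  intro Ht. pose proof (energy t Ht) as Hen. pose proof (orbit_m Horb) as hm.
  pose proof (droot_shift_pos m beta (F t) ltac:(lra)) as HD.
  destruct (droot_facts m beta ltac:(lra)) as [hs [hs2 _]].
  destruct (kmod_facts m beta ltac:(lra)) as [_ hk2].
  destruct sqrt2_facts as [hr2 hr0].
  unfold psi. rewrite sin_atan_sq, hk2.
  replace ((sqrt 2 * F1 t / (droot m beta - beta + F t ^ 2)) ^ 2)
    with (2 * F1 t ^ 2 / (droot m beta - beta + F t ^ 2) ^ 2)
    by (unfold Rdiv; rewrite !Rpow_mult_distr, hr2, pow_inv; ring).
  rewrite Hen. replace (m ^ 2) with ((droot m beta ^ 2 - beta ^ 2) / 2) by lra.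
  field. split; [lra | split; [lra | nra]].
Qed.

Lemma xcoord_ends : xcoord (-T) = 1 /\ xcoord T = -1.
Proof.
  destruct psi_ends as [Hl Hr].
  destruct (kmod_facts m beta ltac:(pose proof (orbit_m Horb); lra)) as [hk _].
  unfold xcoord. rewrite Hl, Hr, sin_neg, sin_asin by lra. split; field; lra.
Qed.

Lemma xcoord_continuous t : continuity_pt xcoord t.
Proof.
  destruct (kmod_facts m beta ltac:(pose proof (orbit_m Horb); lra)) as [hk _].
  pose proof psi_continuous. unfold xcoord. cpt. lra.
Qed.

Lemma one_minus_xcoord_sq t : -T <= t <= T ->
  1 - xcoord t ^ 2 = F t ^ 2 / (2 * droot m beta * kmod m beta ^ 2).
Proof.
  intro Ht. pose proof (orbit_m Horb) as hm.
  destruct (kmod_facts m beta ltac:(lra)) as [hk hk2].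
  destruct (droot_facts m beta ltac:(lra)) as [hs _].
  unfold xcoord. unfold Rdiv at 1. rewrite Rpow_mult_distr, sin_psi_sq, pow_inv by exact Ht.
  field. lra.
Qed.

Lemma xcoord_range t : -T < t < T -> -1 < xcoord t < 1.
Proof.
  intro Ht. pose proof (one_minus_xcoord_sq t ltac:(lra)) as Hq.
  pose proof (orbit_pos Horb t Ht) as HF. pose proof (orbit_m Horb) as hm.
  destruct (kmod_facts m beta ltac:(lra)) as [hk _].
  destruct (droot_facts m beta ltac:(lra)) as [hs _].
  assert (0 < F t ^ 2 / (2 * droot m beta * kmod m beta ^ 2)).
  { apply Rdiv_lt_0_compat; [apply pow_lt; lra |].
    apply Rmult_lt_0_compat; [lra | apply pow_lt; lra]. }
  split; nra.
Qed.

Lemma level_derivable t : -T < t < T ->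
  derivable_pt_lim (fun t => ellF (kmod m beta) (xcoord t) + sqrt (droot m beta) * t) t 0.
Proof.
  intro Ht. pose proof (orbit_m Horb) as hm.
  destruct (kmod_facts m beta ltac:(lra)) as [hk hk2].
  destruct (droot_facts m beta ltac:(lra)) as [hs _].
  destruct sqrt2_facts as [hr2 hr0].
  pose proof (orbit_pos Horb t Ht) as HF.
  pose proof (xcoord_range t Ht) as Hx.
  assert (Hq0 : 0 < sqrt (droot m beta)) by (apply sqrt_lt_R0; lra).
  assert (Hq2 : sqrt (droot m beta) ^ 2 = droot m beta) by (apply pow2_sqrt; lra).
  assert (Hcos : 0 < cos (psi t)).
  { unfold psi. pose proof (atan_bound (sqrt 2 * F1 t / (droot m beta - beta + F t ^ 2))).
    apply cos_gt_0; lra. }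
  assert (Hxd : derivable_pt_lim xcoord t (cos (psi t) * (- F t / sqrt 2) / kmod m beta)).
  { pose proof (psi_derivable t Ht). unfold xcoord. dpl. field. lra. }
  assert (Hk1 : kmod m beta ^ 2 <= 1) by (simpl; nra).
  pose proof (dpl_comp xcoord (ellF (kmod m beta)) t _ _ Hxd
                (ellF_derivable (kmod m beta) (xcoord t) Hk1 Hx)).
  assert (S1 : sqrt (1 - xcoord t ^ 2)
               = F t / (sqrt 2 * sqrt (droot m beta) * kmod m beta)).
  { apply sqrt_lem_1; [nra |
      apply Rlt_le, Rdiv_lt_0_compat; [lra | repeat apply Rmult_lt_0_compat; lra] |].
    rewrite one_minus_xcoord_sq by lra.
    replace (2 * droot m beta * kmod m beta ^ 2)
      with ((sqrt 2 * sqrt (droot m beta) * kmod m beta) ^ 2)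
      by (rewrite !Rpow_mult_distr, hr2, Hq2; ring).
    field. repeat split; lra. }
  assert (S2 : sqrt (1 - kmod m beta ^ 2 * xcoord t ^ 2) = cos (psi t)).
  { apply sqrt_lem_1; [ | lra |].
    - pose proof (K_integrand_factors_pos _ _ Hk1 Hx). lra.
    - unfold xcoord. pose proof (sin2_cos2 (psi t)) as Hsc. unfold Rsqr in Hsc.
      field_simplify; lra. }
  dpl. unfold K_integrand. rewrite S1, S2. field. repeat split; lra.
Qed.

Lemma level_curve t : -T < t < T ->
  ellF (kmod m beta) (xcoord t) = ellF (kmod m beta) (xcoord 0) - sqrt (droot m beta) * t.
Proof.
  intro Ht. set (Lv := fun t => ellF (kmod m beta) (xcoord t) + sqrt (droot m beta) * t).
  assert (Hconst : forall a b, -T < a -> a <= b -> b < T -> Lv b = Lv a).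
  { intros a b Ha Hab Hb. apply const_on_interval; [exact Hab | |].
    - intros x Hx. apply level_derivable. lra.
    - intros x Hx. apply derivable_continuous_pt. exists 0. apply level_derivable. lra. }
  pose proof (orbit_T Horb).
  assert (Lv t = Lv 0) by (destruct (Rle_dec t 0); [symmetry |]; apply Hconst; lra).
  unfold Lv in *. lra.
Qed.

(* The period identity sqrt s * T = K(k): by the level-curve relation,
   F(c, k) tends to C + sqrt s * T as c -> 1^-, where C = F(x(0), k); running
   the orbit backwards and using the oddness of F(., k) shows that the same
   limit equals - C + sqrt s * T, whence C = 0. *)
Lemma period_identity :
  improper_RInt_right (K_integrand (kmod m beta)) 0 1 (sqrt (droot m beta) * T).
Proof.
  pose proof (orbit_T Horb) as hT. pose proof (orbit_m Horb) as hm.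
  destruct (kmod_facts m beta ltac:(lra)) as [hk _].
  destruct (droot_facts m beta ltac:(lra)) as [hs _].
  destruct xcoord_ends as [Hxl Hxr].
  set (k := kmod m beta) in *. set (q := sqrt (droot m beta)).
  set (C := ellF k (xcoord 0)).
  assert (Hq : 0 < q) by (apply sqrt_lt_R0; lra).
  assert (Hk1 : k ^ 2 <= 1) by (simpl; nra).
  assert (Hforward : left_limit (ellF k) 1 (C - q * - T)).
  { apply (left_limit_along_curve _ xcoord (-T) T (-1) 1); try lra.
    - apply xcoord_continuous.
    - exact xcoord_range.
    - exact level_curve.
    - intros u v Hu Huv Hv. now apply ellF_mono. }
  assert (Hbackward : left_limit (fun c => - ellF k (- c)) 1 (- C - q * - T)).
  { apply (left_limit_along_curve _ (fun t => - xcoord (- t)) (-T) T (-1) 1); try lra.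
    - apply (continuity_pt_opp (fun t => xcoord (- t))), (cpt_comp (fun t => - t) xcoord).
      + apply (continuity_pt_opp (fun t => t)), continuity_pt_id.
      + apply xcoord_continuous.
    - rewrite Ropp_involutive, Hxr. ring.
    - intros t Ht. pose proof (xcoord_range (- t) ltac:(lra)). lra.
    - intros t Ht. rewrite Ropp_involutive, level_curve by lra. fold k C q. ring.
    - intros u v Hu Huv Hv. apply Ropp_le_contravar, ellF_mono; lra. }
  assert (HC : C - q * - T = - C - q * - T).
  { apply (left_limit_unique (ellF k) (fun c => - ellF k (- c)) 0 1);
      [lra | | exact Hforward | exact Hbackward].
    intros c Hc. rewrite ellF_odd by lra. symmetry. apply Ropp_involutive. }
  replace (q * T) with (C - q * - T) by lra.
  apply improper_of_left_limit; [ | exact Hforward].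
  intros x Hx. apply K_integrand_continuous; lra.
Qed.
End Orbit.

Lemma clamped_orbit (m beta T : R) (f f1 : R -> R) :
  0 < m -> 0 < T ->
  (forall t, -T <= t <= T -> limit1_in f (fun x => -T <= x <= T) (f t) t) ->
  (forall t, -T <= t <= T -> limit1_in f1 (fun x => -T <= x <= T) (f1 t) t) ->
  (forall t, -T < t < T -> derivable_pt_lim f t (f1 t)) ->
  (forall t, -T < t < T -> derivable_pt_lim f1 t (- (f t) ^ 3 + beta * f t)) ->
  f (- T) = 0 -> f T = 0 -> f1 (- T) = m -> f1 T = - m ->
  (forall t, -T < t < T -> 0 < f t) ->
  orbit T beta m (fun t => f (clamp (-T) T t)) (fun t => f1 (clamp (-T) T t)).
Proof.
  intros hm hT Hfc Hf1c Hdf Hdf1 Hfl Hfr Hf1l Hf1r Hpos.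
  assert (Hid : forall t, -T <= t <= T -> clamp (-T) T t = t) by (intros; now apply clamp_id).
  constructor; try rewrite Hid by lra; auto.
  - apply clamp_continuous; [lra | exact Hfc].
  - apply clamp_continuous; [lra | exact Hf1c].
  - intros t Ht. rewrite Hid by lra. apply clamp_derivable; auto.
  - intros t Ht. rewrite Hid by lra. apply clamp_derivable; auto.
  - intros t Ht. rewrite Hid by lra. auto.
Qed.

Theorem lemma4p2 (m : nat) (beta T : R) (f f1 : R -> R) :
  (1 <= m)%nat ->
  0 < T ->
  (forall t, -T <= t <= T -> limit1_in f (fun x => -T <= x <= T) (f t) t) ->
  (forall t, -T <= t <= T -> limit1_in f1 (fun x => -T <= x <= T) (f1 t) t) ->
  (forall t, -T < t < T -> derivable_pt_lim f t (f1 t)) ->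
  (forall t, -T < t < T -> derivable_pt_lim f1 t (- (f t) ^ 3 + beta * f t)) ->
  f (- T) = 0 -> f T = 0 ->
  f1 (- T) = INR m -> f1 T = - INR m ->
  (forall t, -T < t < T -> 0 < f t) ->
  let k := sqrt ((1 + beta / sqrt (2 * INR m ^ 2 + beta ^ 2)) / 2) in
  (exists Kk, improper_RInt_right (K_integrand k) 0 1 Kk /\
      T = Kk / sqrt (sqrt (2 * INR m ^ 2 + beta ^ 2))) /\
  RInt_eq f (- T) T (2 * sqrt 2 * asin k) /\
  RInt_eq (fun t => f t ^ 3) (- T) T (2 * beta * sqrt 2 * asin k + 2 * INR m) /\
  RInt_eq (fun t => f t ^ 5) (- T) T
    ((2 * INR m ^ 2 + 3 * beta ^ 2) * sqrt 2 * asin k + 3 * INR m * beta).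
Proof.
  intros Hm HT Hfc Hf1c Hdf Hdf1 Hfl Hfr Hf1l Hf1r Hpos k.
  assert (hm : 0 < INR m) by (apply lt_0_INR; lia).
  pose proof (clamped_orbit (INR m) beta T f f1 hm HT Hfc Hf1c Hdf Hdf1 Hfl Hfr Hf1l Hf1r Hpos)
    as Horb.
  assert (Hagree : forall g : R -> R, forall t, -T < t < T -> g (f (clamp (-T) T t)) = g (f t))
    by (intros g t Ht; now rewrite clamp_id by lra).
  destruct (droot_facts (INR m) beta ltac:(lra)) as [hs _].
  assert (hq : 0 < sqrt (droot (INR m) beta)) by (apply sqrt_lt_R0; lra).
  split; [ | split; [ | split]].
  - exists (sqrt (droot (INR m) beta) * T). split.
    + exact (period_identity _ _ _ _ _ Horb).
    + unfold droot in hq |- *. field. lra.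
  - eapply RInt_eq_of_agree; [lra | exact (integral_F _ _ _ _ _ Horb) |].
    exact (Hagree (fun y => y)).
  - eapply RInt_eq_of_agree; [lra | exact (integral_F3 _ _ _ _ _ Horb) |].
    exact (Hagree (fun y => y ^ 3)).
  - eapply RInt_eq_of_agree; [lra | exact (integral_F5 _ _ _ _ _ Horb) |].
    exact (Hagree (fun y => y ^ 5)).
Qed.
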